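(* Let $0<s<\tfrac12$ and $\gamma_2(s)=\frac{2-2^{-2s}}{1-2^{-2s}}$. For every $h\in\mathcal{H}$, $$\mathcal{E}^\delta_s(h)=\gamma_2(s)\,|I(h)|^{-2s}.$$
   Context: Let $\mathbb{R}^+=(0,\infty)$. Dyadic intervals. $\mathcal{D}$ is the family of dyadic intervals $I^j_k=(k2^{-j},(k+1)2^{-j}]$ with $j\in\mathbb{Z}$ and $k$ a nonnegative integer. Dyadic distance. $\delta(x,y)=\inf\{|I|:I\in\mathcal{D},\ x,y\in I\}$ for $x,y\in\mathbb{R}^+$. Haar system. $\mathcal{H}$ consists of the functions $h_I(x)=2^{j/2}h(2^jx-k)$ for $I=I^j_k\in\mathcal{D}$, where $h=\chi_{(0,1/2]}-\chi_{(1/2,1]}$. For $h=h_I$ write $I(h)=I$. Energy form. $\mathcal{E}^\delta_s(\varphi)=\iint_{(\mathbb{R}^+)^2}\frac{|\varphi(x)-\varphi(y)|^2}{\delta(x,y)^{2s}}\,\frac{dx\,dy}{\delta(x,y)}$. *)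

From HB Require Import structures.
From mathcomp Require Import all_boot all_order all_algebra.
From mathcomp Require Import all_classical all_reals all_analysis.
Set Implicit Arguments. Unset Strict Implicit. Unset Printing Implicit Defensive.
Import Order.TTheory GRing.Theory Num.Theory.
Local Open Scope classical_set_scope.
Local Open Scope ring_scope.

Section Dyadic.
Variable R : realType.

Definition dyadic_int (j : int) (k : nat) : set R :=
  [set x | k%:R * (2:R) ^ (- j) < x /\ x <= k.+1%:R * (2:R) ^ (- j)].

Definition dyadic_len (j : int) : R := (2:R) ^ (- j).

Definition delta (x y : R) : R :=
  inf [set l | exists j k, l = dyadic_len j /\ dyadic_int j k x /\ dyadic_int j k y].

Definition haar_mother (t : R) : R :=
  (if (0 < t) && (t <= 2^-1) then 1 else 0)
  - (if (2^-1 < t) && (t <= 1) then 1 else 0).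

Definition haar (j : int) (k : nat) (x : R) : R :=
  (2:R) `^ (j%:~R / 2) * haar_mother ((2:R) ^ j * x - k%:R).

Definition quadrant : set (R * R) := [set z | 0 < z.1 /\ 0 < z.2].

Definition energy_integrand (s : R) (phi : R -> R) (z : R * R) : R :=
  `|phi z.1 - phi z.2| ^+ 2 / (delta z.1 z.2 `^ (2 * s) * delta z.1 z.2).

Definition energy (s : R) (phi : R -> R) : \bar R :=
  (\int[(@lebesgue_measure R \x @lebesgue_measure R)%E]_(z in quadrant)
     (energy_integrand s phi z)%:E)%E.

Definition gamma2 (s : R) : R := (2 - 2 `^ (- (2 * s))) / (1 - 2 `^ (- (2 * s))).

End Dyadic.

From HB Require Import structures.
From mathcomp Require Import all_boot all_order all_algebra.
From mathcomp Require Import all_classical all_reals all_analysis.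
From mathcomp Require Import measurable_realfun.
From mathcomp Require Import zify ring lra.
Import Order.TTheory GRing.Theory Num.Theory.
Local Open Scope classical_set_scope.
Local Open Scope ring_scope.

(* On the dyadic interval I = I^j_k the Haar function equals a = |I|^(-1/2) on
   the left half, -a on the right half, and 0 off I.  So |h(x) - h(y)| vanishes
   outside the pairwise disjoint, symmetric regions
   - halves: x, y in different halves of I, where delta = |I| and the jump is 2a;
   - annulus m >= 1: x in I, y in I^(m) \ I^(m-1), I^(m) the m-th dyadic ancestor
     of I, where delta = 2^m |I| and the jump is a.
   The integrand is therefore a series of nonnegative step functions, which is
   integrated term by term without ever proving delta measurable.  The halves
   contribute 2|I|^(-2s), the m-th annulus |I|^(-2s) 2^(-2sm), and the geometric
   series sums to gamma2(s) |I|^(-2s). *)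

Section dyadic_intervals.
Context {R : realType}.
Implicit Types (j : int) (k : nat) (x : R).

Lemma dyadic_len_gt0 j : 0 < dyadic_len R j.
Proof. exact: exprz_gt0. Qed.

Lemma dyadic_lenD1 j : dyadic_len R (j + 1) = dyadic_len R j / 2.
Proof. by rewrite /dyadic_len opprD exprzDr ?unitfE. Qed.

Lemma dyadic_len_subn j m : dyadic_len R (j - m%:Z) = dyadic_len R j * 2 ^+ m.
Proof. by rewrite /dyadic_len opprB addrC exprzDr ?unitfE. Qed.

Lemma powR_dyadic_len_subn j m t :
  dyadic_len R (j - m%:Z) `^ t = dyadic_len R j `^ t * (2 `^ t) ^+ m.
Proof.
rewrite dyadic_len_subn powRM ?exprn_ge0 ?(ltW (dyadic_len_gt0 _)) //.
by rewrite -powR_mulrn // powRAC powR_mulrn // powR_ge0.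
Qed.

Lemma dyadic_intP j k x : dyadic_int j k x <-> k%:R < x * 2 ^ j /\ x * 2 ^ j <= k.+1%:R.
Proof.
rewrite /dyadic_int /= -!invr_expz.
by rewrite ltr_pdivrMr ?ler_pdivlMr // exprz_gt0.
Qed.

Lemma dyadic_int_gt0 {j k x} : dyadic_int j k x -> 0 < x.
Proof. by case=> + _; apply: le_lt_trans; rewrite mulr_ge0 // ltW // exprz_gt0. Qed.

Lemma dyadic_int_uniq {j k k' x} : dyadic_int j k x -> dyadic_int j k' x -> k = k'.
Proof.
have le_idx a b : a%:R < x * 2 ^ j -> x * 2 ^ j <= b.+1%:R -> (a <= b)%N.
  by move=> ax xb; rewrite -ltnS -(ltr_nat R); apply: lt_le_trans xb.
move=> /dyadic_intP[xk xk1] /dyadic_intP[xk' xk'1].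
by apply/eqP; rewrite eqn_leq (le_idx k k') // (le_idx k' k).
Qed.

Lemma dyadic_int_parent j k x : dyadic_int j k x -> dyadic_int (j - 1) (k %/ 2) x.
Proof.
move=> /dyadic_intP[xk xk1]; apply/dyadic_intP.
have -> : x * 2 ^ (j - 1) = x * 2 ^ j / 2 by rewrite exprzDr ?unitfE // mulrA.
have : (k %/ 2)%:R * 2 <= k%:R :> R by rewrite -natrM ler_nat leq_divM.
have : k.+1%:R <= (k %/ 2).+1%:R * 2 :> R by rewrite -natrM ler_nat ltn_ceil.
by split; lra.
Qed.

Lemma dyadic_int_ancestor j k m x :
  dyadic_int j k x -> dyadic_int (j - m%:Z) (k %/ 2 ^ m) x.
Proof.
move=> xI; elim: m => [|m IHm]; first by rewrite subr0 divn1.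
have -> : j - m.+1%:Z = j - m%:Z - 1 by lia.
by rewrite expnSr divnMA; apply: dyadic_int_parent.
Qed.

Lemma dyadic_int_offsetP j k x : dyadic_int j k x <-> 0 < x * 2 ^ j - k%:R <= 1.
Proof.
rewrite dyadic_intP -(natr1 k) subr_gt0 lerBlDl addrC.
by split=> [[-> ->] | /andP].
Qed.

Lemma dyadic_int_leftP j k x :
  dyadic_int (j + 1) k.*2 x <-> 0 < x * 2 ^ j - k%:R <= 2^-1.
Proof.
rewrite dyadic_intP exprzDr ?unitfE // expr1z -(natr1 k.*2) -muln2 natrM.
by split=> [[? ?] | /andP[? ?]]; [apply/andP|]; split; lra.
Qed.

Lemma dyadic_int_rightP j k x :
  dyadic_int (j + 1) k.*2.+1 x <-> 2^-1 < x * 2 ^ j - k%:R <= 1.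
Proof.
rewrite dyadic_intP exprzDr ?unitfE // expr1z -[k.*2.+2]addn2 -(natr1 k.*2) -muln2 !natrD natrM.
by split=> [[? ?] | /andP[? ?]]; [apply/andP|]; split; lra.
Qed.

Lemma dyadic_int_children j k x : dyadic_int j k x <->
  dyadic_int (j + 1) k.*2 x \/ dyadic_int (j + 1) k.*2.+1 x.
Proof.
rewrite dyadic_int_offsetP dyadic_int_leftP dyadic_int_rightP.
split=> [/andP[? ?] | [/andP[? ?] | /andP[? ?]]]; last 2 first.
- by apply/andP; split; lra.
- by apply/andP; split; lra.
by have [] := leP (x * 2 ^ j - k%:R) 2^-1; [left|right]; apply/andP; split; lra.
Qed.

Lemma dyadic_int_itv j k :
  dyadic_int j k = [set` `]k%:R * 2 ^ (- j), k.+1%:R * 2 ^ (- j)]%O] :> set R.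
Proof. by apply/seteqP; split => x; rewrite /= in_itv /= => /andP. Qed.

Lemma measurable_dyadic_int j k : measurable (dyadic_int j k : set R).
Proof. by rewrite dyadic_int_itv; exact: measurable_itv. Qed.

Lemma lebesgue_measure_dyadic_int j k :
  lebesgue_measure (dyadic_int j k : set R) = (dyadic_len R j)%:E.
Proof.
rewrite dyadic_int_itv lebesgue_measure_itv /= lte_fin ltr_pM2r ?exprz_gt0 //.
by rewrite ltr_nat ltnSn -EFinB -mulrBl -natrB // subSnn mul1r.
Qed.

Lemma dyadic_int_ancestor_exists j k x : 0 < x ->
  exists m, dyadic_int (j - m%:Z) (k %/ 2 ^ m) x.
Proof.
move=> x_gt0; pose N := (Num.truncn (x * 2 ^ j)).+1.
have N_lt : x * 2 ^ j < N%:R by exact: truncnS_gt.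
exists (k + N)%N; apply/dyadic_intP.
have -> : (k %/ 2 ^ (k + N) = 0)%N.
  apply: divn_small; rewrite expnD (leq_trans (ltn_expl k (isT : (1 < 2)%N))) //.
  by rewrite leq_pmulr // expn_gt0.
have -> : x * 2 ^ (j - (k + N)%N%:Z) = x * 2 ^ j / (2 ^ (k + N))%:R.
  by rewrite exprzDr ?unitfE // -invr_expz mulrA natrX.
have pow_gt0 : 0 < (2 ^ (k + N))%:R :> R by rewrite ltr0n expn_gt0.
rewrite divr_gt0 ?mulr_gt0 ?exprz_gt0 //; split => //.
rewrite ler_pdivrMr // mul1r (le_trans (ltW N_lt)) // ler_nat.
by rewrite (leq_trans (ltnW (ltn_expl N (isT : (1 < 2)%N)))) // leq_exp2l // leq_addl.
Qed.

End dyadic_intervals.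

Section dyadic_distance.
Context {R : realType}.
Implicit Types (i j : int) (x y : R).

Definition dyadic_common j x y := exists k, dyadic_int j k x /\ dyadic_int j k y.

Lemma dyadic_common_le i j x y : i <= j -> dyadic_common j x y -> dyadic_common i x y.
Proof.
move=> ij [k [xI yI]]; have [m ->] : exists m : nat, i = j - m%:Z by exists `|j - i|%N; lia.
by exists (k %/ 2 ^ m)%N; split; apply: dyadic_int_ancestor.
Qed.

Lemma delta_sym x y : delta x y = delta y x.
Proof.
rewrite /delta; congr inf.
by apply/seteqP; split=> l [i [k [-> [? ?]]]]; exists i, k.
Qed.

Lemma deltaE j x y : dyadic_common j x y -> ~ dyadic_common (j + 1) x y ->
  delta x y = dyadic_len R j.
Proof.
move=> xyj xyNj1; rewrite /delta; set S := [set l | _].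
have Sj : S (dyadic_len R j) by case: xyj => k [xI yI]; exists j, k.
have S_ge : lbound S (dyadic_len R j).
  move=> _ [i [k [-> [xI yI]]]]; rewrite /dyadic_len ler_weXz2l ?ler1n ?lerN2 //.
  rewrite leNgt; apply/negP => ji; apply: xyNj1.
  by apply: (@dyadic_common_le _ i); [lia | exists k].
apply/eqP; rewrite eq_le lb_le_inf ?andbT //; last by exists (dyadic_len R j).
by apply: ge_inf Sj; exists 0 => _ [i [k [-> _]]]; exact/ltW/dyadic_len_gt0.
Qed.

End dyadic_distance.

Section haar_values.
Context {R : realType}.
Implicit Types (t x : R) (j : int) (k : nat).

Lemma haar_mother_left t : 0 < t <= 2^-1 -> haar_mother t = 1.
Proof. by move=> /andP[t_gt0 t_le]; rewrite /haar_mother t_gt0 t_le ltNge t_le subr0. Qed.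

Lemma haar_mother_right t : 2^-1 < t <= 1 -> haar_mother t = -1.
Proof. by move=> /andP[t_gt t_le1]; rewrite /haar_mother t_gt t_le1 leNgt t_gt andbF sub0r. Qed.

Lemma haar_mother_out t : ~~ (0 < t <= 1) -> haar_mother t = 0.
Proof.
move=> t_out; rewrite /haar_mother !ifF ?subr0 //; apply: contraNF t_out => /andP[? ?].
  by apply/andP; split; lra.
by apply/andP; split; lra.
Qed.

Definition haar_amp j : R := 2 `^ (j%:~R / 2).

Lemma haar_amp_gt0 j : 0 < haar_amp j.
Proof. exact: powR_gt0. Qed.

Lemma haar_amp_sqr j : haar_amp j ^+ 2 = (dyadic_len R j)^-1.
Proof.
rewrite /haar_amp /dyadic_len invr_expz opprK -powR_mulrn ?powR_ge0 // -powRrM.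
by rewrite -powR_intmul // divfK // pnatr_eq0.
Qed.

Lemma haarE j k x : haar j k x = haar_amp j * haar_mother (x * 2 ^ j - k%:R).
Proof. by rewrite /haar (mulrC (2 ^ j)). Qed.

Lemma haar_left j k x : dyadic_int (j + 1) k.*2 x -> haar j k x = haar_amp j.
Proof. by rewrite haarE => /dyadic_int_leftP/haar_mother_left ->; rewrite mulr1. Qed.

Lemma haar_right j k x : dyadic_int (j + 1) k.*2.+1 x -> haar j k x = - haar_amp j.
Proof. by rewrite haarE => /dyadic_int_rightP/haar_mother_right ->; rewrite mulrN1. Qed.

Lemma haar_out {j k x} : ~ dyadic_int j k x -> haar j k x = 0.
Proof.
rewrite haarE dyadic_int_offsetP => /negP/haar_mother_out ->; exact: mulr0.
Qed.

End haar_values.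

Definition setX_sym {T : Type} (A B : set T) : set (T * T) := A `*` B `|` B `*` A.

Lemma nneseries_indic_trivIset {T : Type} {R : realType} {S : (set T)^nat}
    {a : nat -> R} {n z} :
  trivIset setT S -> (forall i, 0 <= a i) -> S n z ->
  (\sum_(i <oo) (a i * \1_(S i) z)%:E = (a n)%:E)%E.
Proof.
move=> Striv a_ge0 Snz.
rewrite (@nneseriesD1 _ _ n xpredT) // ?indicE ?mem_set // ?mulr1; last first.
  by move=> i _; rewrite lee_fin mulr_ge0 ?indic_ge0.
rewrite eseries0 ?adde0 // => i _ /andP[_ /negP ni].
rewrite indicE memNset ?mulr0 // => Siz.
by apply: ni; apply/eqP; apply: Striv => //; exists z.
Qed.

Section measure_lemmas.
Local Open Scope ereal_scope.
Context {d} {T : measurableType d} {R : realType}.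

Lemma measure_setX_sym (mu : {sigma_finite_measure set T -> \bar R}) (A B : set T) :
  measurable A -> measurable B -> A `&` B = set0 ->
  (mu \x mu) (setX_sym A B) = 2%:E * (mu A * mu B).
Proof.
move=> mA mB AB0; rewrite measureU; try exact: measurableX.
  by rewrite /= !product_measure1E // [mu B * _]muleC mule_natl; exact: esym (mule2n _).
by rewrite -setXI AB0 set0X.
Qed.

Lemma integral_nneseries_indic (mu : {measure set T -> \bar R}) (D : set T)
    (S : (set T)^nat) (a : nat -> R) :
  measurable D -> (forall n, measurable (S n)) -> (forall n, S n `<=` D) ->
  (forall n, (0 <= a n)%R) ->
  \int[mu]_(z in D) \sum_(n <oo) (a n * \1_(S n) z)%:E = \sum_(n <oo) (a n)%:E * mu (S n).
Proof.
move=> mD mS SD a_ge0.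
rewrite integral_nneseries //; last 2 first.
- by move=> n; apply/measurable_EFinP; apply: measurable_funM => //; exact: measurable_indic.
- by move=> n z _; rewrite lee_fin mulr_ge0 ?indic_ge0.
apply: eq_eseriesr => n _.
under eq_integral do rewrite EFinM.
rewrite ge0_integralZl ?integral_indic ?setIidl ?lee_fin //.
exact/measurable_EFinP/measurable_indic.
Qed.

End measure_lemmas.

Lemma measurable_quadrant (R : realType) : measurable (@quadrant R).
Proof.
have -> : @quadrant R = `]0, +oo[%classic `*` `]0, +oo[%classic.
  by apply/seteqP; split => -[x y]; rewrite /quadrant /= !in_itv /= !andbT.
by apply: measurableX; exact: measurable_itv.
Qed.

Lemma eseries_geometric (R : realType) (a r : R) : 0 <= r < 1 ->
  (\sum_(n <oo) (a * r ^+ n)%:E = (a / (1 - r))%:E)%E.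
Proof.
move=> /andP[r_ge0 r_lt1]; apply/cvg_lim => //; apply: cvg_EFin.
  by apply: nearW => n; rewrite /= sumEFin.
rewrite [X in X @ _ --> _](_ : _ = series (geometric a r)).
  by apply: cvg_geometric_series; rewrite ger0_norm.
by apply/funext => n; rewrite /= sumEFin.
Qed.

Lemma eseries_geometric_double_head (R : realType) (a r : R) : 0 <= a -> 0 <= r < 1 ->
  (\sum_(n <oo) ((if n is 0 then 2 else 1) * (a * r ^+ n))%:E =
   ((2 - r) / (1 - r) * a)%:E)%E.
Proof.
move=> a_ge0 /andP[r_ge0 r_lt1].
have term_ge0 n : (0 <= ((if n is 0 then 2 else 1) * (a * r ^+ n))%:E)%E.
  by rewrite lee_fin; case: n => [|n]; rewrite !mulr_ge0 ?exprn_ge0.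
rewrite (@nneseries_recl _ xpredT) // -(nneseries_addn 1 term_ge0).
under eq_eseriesr do rewrite addn1 mul1r exprS mulrA.
rewrite eseries_geometric ?r_ge0 ?r_lt1 // -EFinD expr0 mulr1.
by congr (_%:E); field; rewrite subr_eq0 gt_eqF.
Qed.

Section haar_energy.
Variables (R : realType) (s : R) (j : int) (k : nat).

Local Notation I := (dyadic_int j k : set R).
Local Notation I_left := (dyadic_int (j + 1) k.*2 : set R).
Local Notation I_right := (dyadic_int (j + 1) k.*2.+1 : set R).
Local Notation h := (haar j k).

Definition haar_ancestor (m : nat) : set R := dyadic_int (j - m%:Z) (k %/ 2 ^ m).

Lemma haar_ancestor0 : haar_ancestor 0 = I.
Proof. by rewrite /haar_ancestor subr0 divn1. Qed.

Lemma nondecreasing_haar_ancestor : nondecreasing_seq haar_ancestor.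
Proof.
move=> m m' mm'; apply/subsetPset => x /(@dyadic_int_ancestor _ _ _ (m' - m)%N).
rewrite -divnMA -expnD subnKC //.
by have -> : j - m%:Z - (m' - m)%N%:Z = j - m'%:Z by lia.
Qed.

(* By the [seqD] convention, [annulus 0] is [I] itself. *)
Local Notation annulus := (seqD haar_ancestor).

Lemma annulus_cover {x} : 0 < x -> exists n, annulus n x.
Proof.
move=> /(dyadic_int_ancestor_exists j k)[m xm].
have : (\bigcup_n annulus n) x by rewrite eq_bigcup_seqD; exists m.
by case=> n _ xn; exists n.
Qed.

Lemma annulus_disjoint {m n x} : annulus m x -> annulus n x -> m = n.
Proof.
by move=> xm xn; apply: (trivIset_seqD nondecreasing_haar_ancestor) => //; exists x.
Qed.

Lemma annulusS_notin {m x} : annulus m.+1 x -> ~ I x.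
Proof.
by move=> xm xI; have /= := @annulus_disjoint m.+1 0 x xm; rewrite haar_ancestor0 => /(_ xI).
Qed.

Lemma delta_halves x y : I_left x -> I_right y -> delta x y = dyadic_len R j.
Proof.
move=> xl yr; apply: deltaE.
  by exists k; split; apply/dyadic_int_children; [left | right].
by move=> [k' [xk' yk']]; have := dyadic_int_uniq xl xk'; have := dyadic_int_uniq yr yk'; lia.
Qed.

Lemma delta_annulus m x y : I x -> annulus m.+1 y -> delta x y = dyadic_len R (j - m.+1%:Z).
Proof.
move=> xI [ym1 ym]; apply: deltaE.
  by exists (k %/ 2 ^ m.+1)%N; split => //; apply: dyadic_int_ancestor.
have -> : j - m.+1%:Z + 1 = j - m%:Z by lia.
move=> [k' [xk' yk']]; apply: ym.
by rewrite /haar_ancestor -(dyadic_int_uniq xk' (dyadic_int_ancestor _ _ m _ xI)).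
Qed.

Lemma norm_haar_in x : I x -> `|h x| = haar_amp j.
Proof.
case/dyadic_int_children => [/haar_left | /haar_right] ->;
  by rewrite ?normrN gtr0_norm ?haar_amp_gt0.
Qed.

Definition haar_piece n : set (R * R) :=
  if n is 0 then setX_sym I_left I_right else setX_sym I (annulus n).

Definition haar_jump n : R := if n is 0 then 2 * haar_amp j else haar_amp j.

Definition haar_piece_value n : R :=
  haar_jump n ^+ 2 / (dyadic_len R (j - n%:Z) `^ (2 * s) * dyadic_len R (j - n%:Z)).

Lemma haar_piece_value_ge0 n : 0 <= haar_piece_value n.
Proof. by rewrite divr_ge0 ?sqr_ge0 ?mulr_ge0 ?powR_ge0 ?(ltW (dyadic_len_gt0 _)). Qed.

Lemma delta_piece {n x y} : haar_piece n (x, y) -> delta x y = dyadic_len R (j - n%:Z).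
Proof.
case: n => [|m] [] [xA yB]; rewrite ?subr0.
- exact: delta_halves.
- by rewrite delta_sym; apply: delta_halves.
- exact: delta_annulus.
- by rewrite delta_sym; apply: delta_annulus.
Qed.

Lemma norm_haar_jump {n x y} : haar_piece n (x, y) -> `|h x - h y| = haar_jump n.
Proof.
have amp_gt0 := haar_amp_gt0 (R := R) j.
case: n => [|m] [] [/= xA yB]; rewrite /haar_jump.
- by rewrite haar_left // haar_right // opprK gtr0_norm ?addr_gt0 // mulr_natl mulr2n.
- by rewrite haar_right // haar_left // -opprD normrN gtr0_norm ?addr_gt0 // mulr_natl mulr2n.
- by rewrite (haar_out (annulusS_notin yB)) subr0 norm_haar_in.
- by rewrite (haar_out (annulusS_notin xA)) sub0r normrN norm_haar_in.
Qed.

Lemma energy_integrand_piece {n z} :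
  haar_piece n z -> energy_integrand s h z = haar_piece_value n.
Proof.
by case: z => x y zn; rewrite /energy_integrand /= (delta_piece zn) (norm_haar_jump zn).
Qed.

Lemma trivIset_haar_piece : trivIset setT haar_piece.
Proof.
have halves_in z : haar_piece 0 z -> I z.1 /\ I z.2.
  by case: z => x y [] [? ?]; split; apply/dyadic_int_children; by [left | right].
have annulusS_out n z : haar_piece n.+1 z -> ~ (I z.1 /\ I z.2).
  case: z => x y [] [/= xA yB] [/= xI yI].
  - exact: annulusS_notin yB yI.
  - exact: annulusS_notin xA xI.
move=> [|m] [|n] _ _ [z [zm zn]] //.
- by case: (annulusS_out _ _ zn); apply: halves_in.
- by case: (annulusS_out _ _ zm); apply: halves_in.
case: z zm zn => x y [] [xA yB] [] [xA' yB'].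
- exact: annulus_disjoint yB yB'.
- by case: (annulusS_notin yB).
- by case: (annulusS_notin xA).
- exact: annulus_disjoint xA xA'.
Qed.

Lemma energy_integrand_off_pieces z : quadrant z -> (forall n, ~ haar_piece n z) ->
  energy_integrand s h z = 0.
Proof.
case: z => x y [/= x_gt0 y_gt0] Nz.
suff hxy : h x = h y by rewrite /energy_integrand /= hxy subrr normr0 expr0n mul0r.
have [xI|xNI] := pselect (I x); have [yI|yNI] := pselect (I y).
- case/dyadic_int_children: xI => [xl|xr]; case/dyadic_int_children: yI => [yl|yr].
  + by rewrite !haar_left.
  + by case: (Nz 0); left.
  + by case: (Nz 0); right.
  + by rewrite !haar_right.
- have [[|n] yn] := annulus_cover y_gt0; first by rewrite /= haar_ancestor0 in yn.
  by case: (Nz n.+1); left.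
- have [[|n] xn] := annulus_cover x_gt0; first by rewrite /= haar_ancestor0 in xn.
  by case: (Nz n.+1); right.
- by rewrite !haar_out.
Qed.

Lemma energy_integrand_series z : quadrant z ->
  (energy_integrand s h z)%:E = (\sum_(n <oo) (haar_piece_value n * \1_(haar_piece n) z)%:E)%E.
Proof.
move=> zq; have [[n zn]|Nz] := pselect (exists n, haar_piece n z).
  rewrite (energy_integrand_piece zn).
  by rewrite (nneseries_indic_trivIset trivIset_haar_piece haar_piece_value_ge0 zn).
rewrite energy_integrand_off_pieces //; last by move=> n zn; apply: Nz; exists n.
rewrite eseries0 // => n _ _; rewrite indicE memNset ?mulr0 // => zn.
by apply: Nz; exists n.
Qed.

Lemma halves_disjoint : I_left `&` I_right = set0.
Proof. by apply/seteqP; split => // x [xl xr]; have := dyadic_int_uniq xl xr; lia. Qed.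

Lemma annulusS_disjoint m : I `&` annulus m.+1 = set0.
Proof. by apply/seteqP; split => // x [xI /annulusS_notin]. Qed.

Lemma measurable_annulus n : measurable (annulus n).
Proof. by case: n => [|n]; [|apply: measurableD]; exact: measurable_dyadic_int. Qed.

Lemma measurable_haar_piece n : measurable (haar_piece n).
Proof.
rewrite /haar_piece /setX_sym; case: n => [|n]; apply: measurableU; apply: measurableX;
  by [exact: measurable_dyadic_int | exact: measurable_annulus].
Qed.

Lemma haar_piece_quadrant n : haar_piece n `<=` @quadrant R.
Proof.
have ancestor_gt0 m x : haar_ancestor m x -> 0 < x by apply: dyadic_int_gt0.
case: n => [|n] [x y] [] [/= xA yB]; split => /=; by [
  exact: dyadic_int_gt0 xA | exact: dyadic_int_gt0 yB |
  exact: ancestor_gt0 _ _ xA.1 | exact: ancestor_gt0 _ _ yB.1].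
Qed.

Lemma lebesgue_measure_annulusS m :
  lebesgue_measure (annulus m.+1) = (dyadic_len R (j - m.+1%:Z) / 2)%:E.
Proof.
rewrite measureD /=; try exact: measurable_dyadic_int; last first.
  by rewrite /haar_ancestor lebesgue_measure_dyadic_int ltry.
rewrite setIidr; last exact/subsetPset/nondecreasing_haar_ancestor.
rewrite /haar_ancestor /= !lebesgue_measure_dyadic_int -EFinB; congr (_%:E).
have -> : j - m%:Z = j - m.+1%:Z + 1 by lia.
by rewrite dyadic_lenD1; field.
Qed.

Local Notation mu := (@lebesgue_measure R \x @lebesgue_measure R)%E.

Lemma haar_piece_value_measure n : ((haar_piece_value n)%:E * mu (haar_piece n))%E =
  ((if n is 0 then 2 else 1) * dyadic_len R (j - n%:Z) `^ (- (2 * s)))%:E.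
Proof.
have L_gt0 := dyadic_len_gt0 (R := R) j.
rewrite /haar_piece_value powRN; case: n => [|m].
- have -> : j - 0%:Z = j by lia.
  have P_gt0 : 0 < dyadic_len R j `^ (2 * s) by exact: powR_gt0.
  rewrite measure_setX_sym; [|exact: measurable_dyadic_int..|exact: halves_disjoint].
  rewrite /= !lebesgue_measure_dyadic_int -!EFinM; congr (_%:E).
  by rewrite exprMn haar_amp_sqr dyadic_lenD1; field; rewrite !gt_eqF.
- have D_gt0 := dyadic_len_gt0 (R := R) (j - m.+1%:Z).
  have P_gt0 : 0 < dyadic_len R (j - m.+1%:Z) `^ (2 * s) by exact: powR_gt0.
  rewrite measure_setX_sym; last exact: annulusS_disjoint; last 2 first.
  + exact: measurable_dyadic_int.
  + exact: measurable_annulus.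
  rewrite /= lebesgue_measure_dyadic_int lebesgue_measure_annulusS -!EFinM.
  by congr (_%:E); rewrite haar_amp_sqr; field; rewrite !gt_eqF.
Qed.

Lemma energy_haar_series : energy s h =
  (\sum_(n <oo) ((if n is 0 then 2 else 1) * dyadic_len R (j - n%:Z) `^ (- (2 * s)))%:E)%E.
Proof.
rewrite /energy (eq_integral (fun z : measurableTypeR R * measurableTypeR R =>
  \sum_(n <oo) (haar_piece_value n * \1_(haar_piece n) z)%:E)%E); last first.
  by move=> z /set_mem; exact: energy_integrand_series.
rewrite integral_nneseries_indic; last 4 first.
- exact: measurable_quadrant.
- exact: measurable_haar_piece.
- exact: haar_piece_quadrant.
- exact: haar_piece_value_ge0.
by apply: eq_eseriesr => n _; exact: haar_piece_value_measure.
Qed.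

End haar_energy.

Theorem lemma2p4 (R : realType) (s : R) (hs0 : 0 < s) (hs1 : s < 2^-1)
  (j : int) (k : nat) :
  energy s (@haar R j k) = (gamma2 s * @dyadic_len R j `^ (- (2 * s)))%:E.
Proof.
rewrite energy_haar_series.
under eq_eseriesr do rewrite powR_dyadic_len_subn.
have r_lt1 : 2 `^ (- (2 * s)) < 1 :> R.
  have : 1 `^ (2 * s) < 2 `^ (2 * s) :> R by rewrite gt0_ltr_powR ?mulr_gt0 ?ltr1n ?nnegrE.
  by rewrite powR1 powRN invf_lt1 ?powR_gt0.
by rewrite eseries_geometric_double_head ?powR_ge0 ?r_lt1.
Qed.
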